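(* Let $p$ be an odd prime and let $s$ be an integer with $0\le s\le\frac{p-1}{2}$. Then $$\sum_{k=0}^{\frac{p-1}{2}}\frac{(q;q^2)_k\,(q;q^2)_{k+s}}{(q^2;q^2)_k\,(q^2;q^2)_{k+s}}\equiv \left(\frac{-1}{p}\right)q^{\frac{1-p^2}{4}}\pmod{[p]^2}.$$
   Context: For an indeterminate $q$ and an integer $n\ge 0$: $(a;q)_0=1$ and $(a;q)_n=(1-a)(1-aq)\cdots(1-aq^{n-1})$. For a positive integer $p$, $[p]=\frac{1-q^p}{1-q}=1+q+\cdots+q^{p-1}$. For a prime $p$, $[p]$ is irreducible in $\mathbb{Q}[q]$; for rational functions $A,B$ of $q$ whose denominators are coprime to $[p]$, $A\equiv B\pmod{[p]^r}$ means that $A-B$, written in lowest terms, has numerator divisible by $[p]^r$ in $\mathbb{Q}[q]$. $\left(\frac{\cdot}{p}\right)$ denotes the Legendre symbol modulo $p$. *)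

From HB Require Import structures.
From mathcomp Require Import all_boot all_order all_algebra.
From mathcomp Require Import fraction.
Set Implicit Arguments. Unset Strict Implicit. Unset Printing Implicit Defensive.
Import Order.TTheory GRing.Theory Num.Theory.
Local Open Scope ring_scope.

Definition Qq : Type := {fraction {poly rat}}.

Definition polyF (P : {poly rat}) : Qq := FracField.tofrac P.

Definition qv : Qq := polyF 'X.

Definition qpoch (R : nzRingType) (a x : R) (n : nat) : R :=
  \prod_(i < n) (1 - a * x ^+ i).

Definition qint (p : nat) : {poly rat} := \sum_(i < p) 'X^i.

Definition qcongr (A B : Qq) (m : {poly rat}) (r : nat) : Prop :=
  exists (n d : {poly rat}),
    [/\ d != 0, coprimep d m, A - B = polyF n / polyF d & m ^+ r %| n].

Definition legendre (a : int) (p : nat) : int :=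
  if (p%:Z %| a)%Z then 0
  else if [exists x : 'I_p, (p%:Z %| (x%:Z) ^+ 2 - a)%Z] then 1 else -1.

(* Put Q = q^2, m = (p-1)/2 and
     G(a) = sum_{k <= m} (aq;Q)_k (q/a;Q)_{k+s} / ((Q;Q)_k (Q;Q)_{k+s}),
   so that the sum in question is G(1). Since q^p = 1 (mod [p]) and
   q^p + q^-p - 2 = (q^p - 1)^2 / q^p = 0 (mod [p]^2), every function f of a
   built by sums and products from a, 1/a and [p]-integral constants satisfies
   f(q^p) + f(q^-p) = 2 f(1) (mod [p]^2). This applies to G: the constants
   1/(Q;Q)_n with n < p are [p]-integral, as [p] is coprime to q^j - 1 whenever
   p does not divide j. At a = q^p and a = q^-p the sum becomes a terminating
   q-series that telescopes to (Q^-m;Q)_m / (Q;Q)_m = (-1)^m q^(-m(m+1)).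
   Finally (-1)^m = (-1/p) by Wilson's theorem, and m(m+1) = (p^2-1)/4. *)

From HB Require Import structures.
From mathcomp Require Import all_boot all_order all_algebra.
From mathcomp Require Import fraction finfield.
From mathcomp Require Import ring zify.
Set Implicit Arguments. Unset Strict Implicit. Unset Printing Implicit Defensive.
Import Order.TTheory GRing.Theory Num.Theory.
Local Open Scope ring_scope.

(* [qdvd P r x] reads x = 0 (mod P^r); for r = 0 it says that x is P-integral. *)
Definition qdvd (P : {poly rat}) (r : nat) (x : Qq) : Prop := qcongr x 0 P r.

Lemma qdvdP P r x : qdvd P r x <-> exists n d : {poly rat},
  [/\ d != 0, coprimep d P, x = polyF n / polyF d & P ^+ r %| n].
Proof. by rewrite /qdvd /qcongr subr0. Qed.

Lemma polyF_neq0 (d : {poly rat}) : d != 0 -> polyF d != 0.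
Proof. by rewrite /polyF tofrac_eq0. Qed.

Section Divisibility.
Variable P : {poly rat}.

Lemma qdvd_polyF r n : P ^+ r %| n -> qdvd P r (polyF n).
Proof.
move=> Prn; apply/qdvdP; exists n, 1; split; rewrite ?oner_neq0 ?coprime1p //.
by rewrite /polyF rmorph1 divr1.
Qed.

Lemma qdvd0 r : qdvd P r 0.
Proof. by rewrite -(rmorph0 (@FracField.tofrac _)); apply: qdvd_polyF; rewrite dvdp0. Qed.

Lemma qdvd_polyF0 n : qdvd P 0 (polyF n).
Proof. by apply: qdvd_polyF; rewrite expr0 dvd1p. Qed.

Lemma qdvd1 : qdvd P 0 1.
Proof. by rewrite -(rmorph1 (@FracField.tofrac _)); apply: qdvd_polyF0. Qed.

Lemma qdvdV_polyF d : d != 0 -> coprimep d P -> qdvd P 0 (polyF d)^-1.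
Proof.
move=> d_neq0 dP; apply/qdvdP; exists 1, d; split; rewrite ?dvd1p //.
by rewrite /polyF rmorph1 div1r.
Qed.

Lemma qdvdD r x y : qdvd P r x -> qdvd P r y -> qdvd P r (x + y).
Proof.
move=> /qdvdP[n1 [d1 [d1_neq0 d1P -> Pn1]]] /qdvdP[n2 [d2 [d2_neq0 d2P -> Pn2]]].
apply/qdvdP; exists (n1 * d2 + n2 * d1), (d1 * d2); split.
- by rewrite mulf_neq0.
- by rewrite coprimepMl d1P d2P.
- by rewrite addf_div ?polyF_neq0 // /polyF rmorphD !rmorphM.
- by rewrite dvdp_add // dvdp_mulr.
Qed.

Lemma qdvdM r s x y : qdvd P r x -> qdvd P s y -> qdvd P (r + s) (x * y).
Proof.
move=> /qdvdP[n1 [d1 [d1_neq0 d1P -> Pn1]]] /qdvdP[n2 [d2 [d2_neq0 d2P -> Pn2]]].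
apply/qdvdP; exists (n1 * n2), (d1 * d2); split.
- by rewrite mulf_neq0.
- by rewrite coprimepMl d1P d2P.
- by rewrite mulf_div /polyF !rmorphM.
- by rewrite exprD dvdp_mul.
Qed.

Lemma qdvdN r x : qdvd P r x -> qdvd P r (- x).
Proof.
move=> /qdvdP[n [d [d_neq0 dP -> Pn]]].
by apply/qdvdP; exists (- n), d; rewrite /polyF rmorphN mulNr dvdpNr.
Qed.

Lemma qdvdW r s x : (s <= r)%N -> qdvd P r x -> qdvd P s x.
Proof.
move=> sr /qdvdP[n [d [d_neq0 dP -> Pn]]].
by apply/qdvdP; exists n, d; split=> //; apply: dvdp_trans Pn; apply: dvdp_exp2l.
Qed.

Lemma qdvdX r n x : qdvd P r x -> qdvd P (r * n) (x ^+ n).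
Proof.
move=> Px; elim: n => [|n IHn]; first by rewrite muln0 expr0; apply: qdvd1.
by rewrite mulnS exprS; apply: qdvdM.
Qed.

Lemma qdvd_prod I (s : seq I) (F : I -> Qq) :
  (forall i, qdvd P 0 (F i)) -> qdvd P 0 (\prod_(i <- s) F i).
Proof. by move=> PF; apply: big_ind => //; [exact: qdvd1 | exact: (@qdvdM 0 0)]. Qed.

Lemma qdvd_half r x : qdvd P r (x + x) -> qdvd P r x.
Proof.
have two_neq0 : (2 : {poly rat}) != 0 by rewrite -polyC_natr polyC_eq0.
have two_coprime : coprimep 2 P.
  by rewrite (eqp_coprimepl _ (_ : _ %= 1)) ?coprime1p // -polyC_natr polyC_eqp1.
have two_neq0' : 2 != 0 :> Qq by have := polyF_neq0 two_neq0; rewrite /polyF rmorph_nat.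
move=> /(qdvdM (qdvdV_polyF two_neq0 two_coprime)).
by rewrite add0n /polyF rmorph_nat -mulr2n -[x *+ 2]mulr_natl mulKf.
Qed.

End Divisibility.

Section Balanced.
Variables (P : {poly rat}) (x : Qq).

Definition balanced (f : Qq -> Qq) : Prop :=
  [/\ qdvd P 0 (f 1), qdvd P 1 (f x - f 1), qdvd P 1 (f x^-1 - f 1)
    & qdvd P 2 ((f x - f 1) + (f x^-1 - f 1))].

Lemma balanced_ext f g : f =1 g -> balanced f -> balanced g.
Proof. by move=> fg; rewrite /balanced !fg. Qed.

Lemma balanced_const c : qdvd P 0 c -> balanced (fun=> c).
Proof. by move=> Pc; split; rewrite // subrr ?addr0; apply: qdvd0. Qed.

Hypotheses (x_sub1 : qdvd P 1 (x - 1)) (xV_sub1 : qdvd P 1 (x^-1 - 1))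
  (x_xV_sub2 : qdvd P 2 ((x - 1) + (x^-1 - 1))).

Lemma balanced_id : balanced id.
Proof. by split=> //=; apply: qdvd1. Qed.

Lemma balanced_inv : balanced GRing.inv.
Proof.
by split; rewrite /= ?invr1 ?invrK //; [apply: qdvd1 | rewrite addrC].
Qed.

Lemma balancedD f g : balanced f -> balanced g -> balanced (fun a => f a + g a).
Proof.
move=> [f1 fx fxV fxxV] [g1 gx gxV gxxV].
have sub_sum a : f a + g a - (f 1 + g 1) = (f a - f 1) + (g a - g 1) by ring.
split; rewrite ?sub_sum; try exact: qdvdD.
have -> : forall u v w z : Qq, u + v + (w + z) = (u + w) + (v + z) by move=> *; ring.
exact: qdvdD.
Qed.

Lemma balancedM f g : balanced f -> balanced g -> balanced (fun a => f a * g a).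
Proof.
move=> [f1 fx fxV fxxV] [g1 gx gxV gxxV].
have sub_prod a : f a * g a - f 1 * g 1 =
    f 1 * (g a - g 1) + g 1 * (f a - f 1) + (f a - f 1) * (g a - g 1) by ring.
have lin_term a : qdvd P 1 (f a - f 1) -> qdvd P 1 (g a - g 1) ->
    qdvd P 1 (f a * g a - f 1 * g 1).
  move=> fa ga; rewrite sub_prod; apply: qdvdD; first by apply: qdvdD; apply: (@qdvdM _ 0 1).
  by apply: (qdvdW _ (qdvdM fa ga)).
split; [exact: (@qdvdM _ 0 0) | exact: lin_term | exact: lin_term |].
rewrite !sub_prod.
have -> : forall u1 u2 u3 v1 v2 v3 : Qq, u1 + u2 + u3 + (v1 + v2 + v3) =
    (u1 + v1) + (u2 + v2) + u3 + v3 by move=> *; ring.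
rewrite -!mulrDr; do 2 (apply: qdvdD; last exact: (@qdvdM _ 1 1)).
by apply: qdvdD; apply: (@qdvdM _ 0 2).
Qed.

Lemma balanced_sum I (s : seq I) (F : I -> Qq -> Qq) :
  (forall i, balanced (F i)) -> balanced (fun a => \sum_(i <- s) F i a).
Proof.
move=> bF; elim: s => [|i s IHs].
  by apply: (@balanced_ext (fun=> 0)) => [a|]; rewrite ?big_nil //; apply/balanced_const/qdvd0.
by apply: (balanced_ext _ (balancedD (bF i) IHs)) => a; rewrite big_cons.
Qed.

Lemma balanced_prod I (s : seq I) (F : I -> Qq -> Qq) :
  (forall i, balanced (F i)) -> balanced (fun a => \prod_(i <- s) F i a).
Proof.
move=> bF; elim: s => [|i s IHs].
  by apply: (@balanced_ext (fun=> 1)) => [a|]; rewrite ?big_nil //; apply/balanced_const/qdvd1.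
by apply: (balanced_ext _ (balancedM (bF i) IHs)) => a; rewrite big_cons.
Qed.

Lemma balanced_qpoch n g c Q : balanced g -> qdvd P 0 c -> qdvd P 0 Q ->
  balanced (fun a => qpoch (g a * c) Q n).
Proof.
move=> bg Pc PQ; apply: balanced_prod => i.
have PcQ : qdvd P 0 (- (c * Q ^+ i)).
  by apply/qdvdN/(@qdvdM _ 0 0) => //; apply: (qdvdX i PQ).
apply: (balanced_ext _ (balancedD (balanced_const (qdvd1 P)) (balancedM bg (balanced_const PcQ)))).
by move=> a /=; rewrite mulrN mulrA.
Qed.

Lemma balanced_congr f T : balanced f -> f x = T -> f x^-1 = T -> qdvd P 2 (f 1 - T).
Proof.
move=> [_ _ _ fxxV] fxT fxVT; apply: qdvd_half.
have -> : f 1 - T + (f 1 - T) = - ((f x - f 1) + (f x^-1 - f 1)) by rewrite fxT fxVT; ring.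
exact: qdvdN.
Qed.

End Balanced.

Lemma qint_mul_subX1 p : qint p * ('X - 1) = 'X^p - 1.
Proof.
elim: p => [|p IHp]; first by rewrite /qint big_ord0 mul0r expr0 subrr.
by rewrite /qint big_ord_recr /= mulrDl IHp exprS; ring.
Qed.

Lemma dvdp_qint p : qint p %| 'X^p - 1.
Proof. by rewrite -qint_mul_subX1 dvdp_mulr. Qed.

Lemma horner_qint p (c : rat) : (qint p).[c] = \sum_(i < p) c ^+ i.
Proof. by rewrite /qint horner_sum; apply: eq_bigr => i _; rewrite hornerXn. Qed.

Lemma coprimep_Xn_qint p n : (0 < p)%N -> coprimep 'X^n (qint p).
Proof.
case: p => [//|p] _; apply: coprimep_expl; rewrite coprimep_sym -[X in coprimep _ X]subr0.
rewrite coprimep_XsubC /root horner_qint big_ord_recl expr0 big1 ?addr0 ?oner_eq0 //.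
by move=> i _; rewrite expr0n.
Qed.

Lemma dvdp_subXn1_mul (R : idomainType) a b : ('X^a - 1 : {poly R}) %| 'X^(a * b) - 1.
Proof. by rewrite exprM -{2}(expr1n _ b) subrXX dvdp_mulr. Qed.

Lemma dvdp_subX1_coprime (R : idomainType) (d : {poly R}) n k : (0 < k)%N -> coprime k n ->
  d %| 'X^n - 1 -> d %| 'X^k - 1 -> d %| 'X - 1.
Proof.
move=> k_gt0 cokn dn dk; have [a _] := Bezoutl n k_gt0.
rewrite (eqP cokn) => /dvdnP[t Et].
have -> : ('X - 1 : {poly R}) = ('X^(k * t) - 1) - 'X * ('X^(n * a) - 1).
  by rewrite mulnC -Et exprS (mulnC n); ring.
by rewrite dvdp_sub ?dvdp_mull // (dvdp_trans _ (dvdp_subXn1_mul _ _ _)).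
Qed.

Lemma coprimep_subXn1_qint p n : prime p -> ~~ (p %| n)%N ->
  coprimep ('X^n - 1) (qint p).
Proof.
move=> p_pr pNn; have p_gt0 := prime_gt0 p_pr.
have : coprimep (qint p) ('X - 1).
  rewrite -polyC1 coprimep_XsubC /root horner_qint.
  by under eq_bigr do rewrite expr1n; rewrite sumr_const card_ord pnatr_eq0 -lt0n.
rewrite coprimep_sym /coprimep -!dvdp1; apply: dvdp_trans.
rewrite dvdp_gcd dvdp_gcdr andbT (@dvdp_subX1_coprime _ _ n p) ?dvdp_gcdl //.
  by rewrite prime_coprime.
exact: dvdp_trans (dvdp_gcdr _ _) (dvdp_qint p).
Qed.

Lemma qvX n : qv ^+ n = polyF 'X^n.
Proof. by rewrite /qv /polyF rmorphXn. Qed.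

Lemma qvX_sub1 n : qv ^+ n - 1 = polyF ('X^n - 1).
Proof. by rewrite qvX /polyF rmorphB rmorph1. Qed.

Lemma subXn1_neq0 n : (0 < n)%N -> ('X^n - 1 : {poly rat}) != 0.
Proof. by move=> n_gt0; rewrite -size_poly_eq0 -polyC1 size_XnsubC. Qed.

Lemma qv_neq0 : qv != 0.
Proof. by rewrite polyF_neq0 ?polyX_eq0. Qed.

Lemma qvX_neq1 n : (0 < n)%N -> qv ^+ n != 1.
Proof. by move=> n_gt0; rewrite -subr_eq0 qvX_sub1 polyF_neq0 ?subXn1_neq0. Qed.

Section QPowerP.
Variable p : nat.
Hypothesis p_gt0 : (0 < p)%N.

Lemma qdvd_qvX_sub1 : qdvd (qint p) 1 (qv ^+ p - 1).
Proof. by rewrite qvX_sub1; apply: qdvd_polyF; rewrite expr1 dvdp_qint. Qed.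

Lemma qdvd_qvXV : qdvd (qint p) 0 (qv ^+ p)^-1.
Proof. by rewrite qvX; apply: qdvdV_polyF; rewrite ?monic_neq0 ?monicXn ?coprimep_Xn_qint. Qed.

Lemma qdvd_qvXV_sub1 : qdvd (qint p) 1 ((qv ^+ p)^-1 - 1).
Proof.
have -> : (qv ^+ p)^-1 - 1 = - (qv ^+ p - 1) * (qv ^+ p)^-1.
  by rewrite mulNr mulrBl mulfV ?expf_neq0 ?qv_neq0 // mul1r opprB.
by apply: (@qdvdM _ 1 0); [apply/qdvdN/qdvd_qvX_sub1 | apply: qdvd_qvXV].
Qed.

Lemma qdvd_qvX_sub2 : qdvd (qint p) 2 ((qv ^+ p - 1) + ((qv ^+ p)^-1 - 1)).
Proof.
have sum_sq (F : fieldType) (z : F) : z != 0 -> (z - 1) + (z^-1 - 1) = (z - 1) ^+ 2 * z^-1.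
  by move=> z_neq0; field.
rewrite sum_sq ?expf_neq0 ?qv_neq0 //.
by apply: (@qdvdM _ 2 0); [apply: (qdvdX 2 qdvd_qvX_sub1) | apply: qdvd_qvXV].
Qed.

End QPowerP.

Lemma qdvd_qpochV p n : prime p -> odd p -> (n < p)%N ->
  qdvd (qint p) 0 (qpoch (qv ^+ 2) (qv ^+ 2) n)^-1.
Proof.
move=> p_pr p_odd n_lt_p; rewrite /qpoch -prodfV; apply: qdvd_prod => i.
have i_gt0 : (0 < 2 * i.+1)%N by rewrite muln_gt0.
rewrite -exprS -exprM -opprB qvX_sub1 invrN; apply/qdvdN/qdvdV_polyF; first exact: subXn1_neq0.
apply: coprimep_subXn1_qint; rewrite // Euclid_dvdM // negb_or; apply/andP; split.
  by rewrite dvdn_prime2 //; apply: contraTneq p_odd => ->.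
by rewrite gtnNdvd // (leq_ltn_trans _ n_lt_p).
Qed.

Lemma qpochS (R : nzRingType) (a x : R) n : qpoch a x n.+1 = qpoch a x n * (1 - a * x ^+ n).
Proof. by rewrite /qpoch big_ord_recr. Qed.

Definition qratio (F : fieldType) (b Q : F) (k : nat) : F := qpoch b Q k / qpoch Q Q k.

Section QRatioSums.
Variables (F : fieldType) (Q : F).
Hypotheses (Q_neq0 : Q != 0) (Q_not_root1 : forall j, (0 < j)%N -> Q ^+ j != 1).

Lemma subr1_QX_neq0 j : 1 - Q ^+ j.+1 != 0.
Proof. by rewrite subr_eq0 eq_sym Q_not_root1. Qed.

Lemma qratio0 b : qratio b Q 0 = 1.
Proof. by rewrite /qratio /qpoch !big_ord0 divr1. Qed.

Lemma qratioS b k : qratio b Q k.+1 = qratio b Q k * (1 - b * Q ^+ k) / (1 - Q ^+ k.+1).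
Proof. by rewrite /qratio !qpochS exprS invfM mulrACA mulrA. Qed.

Lemma qratio_gt m k : (m < k)%N -> qratio (Q ^+ m)^-1 Q k = 0.
Proof.
move=> lt_mk; rewrite /qratio /qpoch (bigD1 (Ordinal lt_mk)) //=.
by rewrite mulVf ?expf_neq0 // subrr mul0r mul0r.
Qed.

Lemma qratio_top m : qratio (Q ^+ m)^-1 Q m = (-1) ^+ m * (Q ^+ 'C(m.+1, 2))^-1.
Proof.
have factor (z : F) : z != 0 -> 1 - z != 0 -> (1 - z^-1) / (1 - z) = - z^-1.
  by move=> z_neq0 z_neq1; field; rewrite z_neq0 z_neq1.
have shift i : (i < m)%N -> (Q ^+ m)^-1 * Q ^+ (m - i.+1) = (Q ^+ i.+1)^-1.
  move=> lt_im; rewrite -{1}(subnK lt_im) exprD invfM mulrAC mulVf ?expf_neq0 ?mul1r //.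
rewrite /qratio /qpoch (reindex_inj rev_ord_inj) /=.
under eq_bigr => i _ do rewrite shift //.
rewrite -prodf_div.
under eq_bigr => i _ do rewrite -exprS factor ?expf_neq0 ?subr1_QX_neq0 //.
by rewrite prodrN card_ord prodfV prodrXr -bin2_sum big_nat_recl // add0n big_mkord.
Qed.

Variable m : nat.

(* Both sums below are values of t |-> sum_k a k * h (k + t - m), with h vanishing
   at negative arguments; this function of t is constant since its increments
   telescope in k. *)
Let a k := qratio (Q ^+ m)^-1 Q k.
Let h j := qratio (Q ^+ m.+1) Q j.
Let h_shift i := if (m <= i)%N then h (i - m) else 0.
Let G t k := a k * (1 - Q ^+ k) * h_shift (k + t) / (1 - (Q ^+ t.+1)^-1).

Lemma telescoping_step t k : a k * (h_shift (k + t.+1) - h_shift (k + t)) = G t k.+1 - G t k.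
Proof.
have T_neq0 : Q ^+ t.+1 != 0 by rewrite expf_neq0.
have T_neq1 : Q ^+ t.+1 - 1 != 0 by rewrite subr_eq0 Q_not_root1.
have TV_neq1 : 1 - (Q ^+ t.+1)^-1 != 0 by rewrite subr_eq0 eq_sym invr_eq1 -subr_eq0.
have a_succ : a k.+1 * (1 - Q ^+ k.+1) = a k * (1 - (Q ^+ m)^-1 * Q ^+ k).
  by rewrite /a qratioS divfK ?subr1_QX_neq0.
rewrite /G /h_shift addSn addnS a_succ.
case: (ltngtP (k + t).+1 m) => [lt_ktm | lt_mkt | eq_ktm].
- by rewrite !ifN ?subrr ?(mulr0, mul0r) ?subrr // -ltnNge // ltnW.
- rewrite ltnS in lt_mkt; rewrite lt_mkt subSn //.
  set j := (k + t - m)%N.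
  have EK : Q ^+ k = Q * Q ^+ m * Q ^+ j / Q ^+ t.+1.
    by apply: (mulIf T_neq0); rewrite divfK // -exprS -!exprD /j; congr (_ ^+ _); lia.
  rewrite /h qratioS EK (exprS _ m) (exprS _ j).
  have M_neq0 : Q ^+ m != 0 by rewrite expf_neq0.
  have QJ_neq1 : 1 - Q * Q ^+ j != 0 by rewrite -exprS subr1_QX_neq0.
  move: (qratio _ Q j) (a k) => hj ak.
  by field; rewrite T_neq0 T_neq1 QJ_neq1 M_neq0.
- have -> : (Q ^+ m)^-1 * Q ^+ k = (Q ^+ t.+1)^-1.
    by rewrite -eq_ktm -addnS exprD invfM mulrAC mulVf ?expf_neq0 ?mul1r.
  rewrite -eq_ktm subnn ifN ?ltnn // /h qratio0.
  by rewrite !(subr0, mulr1, mulr0, mul0r) mulfK.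
Qed.

Lemma sum_shift_const t : \sum_(k < m.+1) a k * h_shift (k + t) = a m.
Proof.
elim: t => [|t IHt].
  rewrite big_ord_recr /= big1 ?add0r => [|i _]; last by rewrite /h_shift addn0 leqNgt ltn_ord mulr0.
  by rewrite /h_shift addn0 leqnn subnn /h qratio0 mulr1.
rewrite -IHt; apply/eqP; rewrite -subr_eq0 -sumrB; apply/eqP.
under eq_bigr => k _ do rewrite -mulrBr telescoping_step.
rewrite -(big_mkord xpredT (fun k => G t k.+1 - G t k)) telescope_sumr //.
by rewrite /G /a qratio_gt // expr0 subrr !(mulr0, mul0r) subrr.
Qed.

Lemma qratio_sum_shiftr s :
  \sum_(k < m.+1) qratio (Q ^+ m)^-1 Q k * qratio (Q ^+ m.+1) Q (k + s) =
  qratio (Q ^+ m)^-1 Q m.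
Proof.
rewrite -[RHS](sum_shift_const (s + m)); apply: eq_bigr => k _.
by rewrite /h_shift addnA leq_addl addnK.
Qed.

Lemma qratio_sum_shiftl s : (s <= m)%N ->
  \sum_(k < m.+1) qratio (Q ^+ m.+1) Q k * qratio (Q ^+ m)^-1 Q (k + s) =
  qratio (Q ^+ m)^-1 Q m.
Proof.
move=> le_sm; rewrite -[RHS](sum_shift_const (m - s)).
rewrite -(big_mkord xpredT (fun k => h k * a (k + s))).
rewrite -(big_mkord xpredT (fun k => a k * h_shift (k + (m - s)))).
rewrite (@big_cat_nat _ _ _ (m.+1 - s)) //= ?leq_subr //.
rewrite [X in _ + X]big_nat_cond [X in _ + X]big1 ?addr0; last first.
  by move=> i /andP[/andP[lt_i _] _]; rewrite /a qratio_gt ?mulr0 //; lia.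
rewrite [RHS](@big_cat_nat _ _ _ s) //= ?leqW //.
rewrite [X in X + _]big_nat_cond [X in X + _]big1 ?add0r; last first.
  by move=> i /andP[/andP[_ lt_is] _]; rewrite /h_shift ifN ?mulr0 //; lia.
rewrite -{3}[s]add0n big_addn; apply: eq_bigr => i _.
by rewrite /h_shift -addnA subnKC // leq_addl addnC addnK mulrC.
Qed.

End QRatioSums.

Lemma natr_fact (R : pzSemiRingType) n : n`!%:R = \prod_(i < n) i.+1%:R :> R.
Proof.
elim: n => [|n IHn]; first by rewrite big_ord0.
by rewrite factS mulnC natrM IHn big_ord_recr.
Qed.

Lemma Wilson_half p m : prime p -> p = (2 * m).+1 ->
  (-1) ^+ m * m`!%:R ^+ 2 = -1 :> 'F_p.
Proof.
move=> p_pr Ep.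
have Wp : (p.-1)`!%:R = -1 :> 'F_p.
  have := Wilson (prime_gt1 p_pr); rewrite p_pr => /esym.
  by rewrite (dvdn_pcharf (pchar_Fp p_pr)) mulrSr addr_eq0 => /eqP.
have upper i : (i < m)%N -> (m + i).+1%:R = - (m - i)%:R :> 'F_p.
  move=> lt_im; apply/eqP; rewrite -addr_eq0 -natrD.
  have -> : ((m + i).+1 + (m - i) = p)%N by lia.
  by rewrite pchar_Fp_0.
rewrite -[RHS]Wp (_ : p.-1 = m + m)%N; last by rewrite Ep; lia.
rewrite [RHS]natr_fact big_split_ord /= -natr_fact.
under [X in _ = _ * X]eq_bigr => i _ do rewrite upper //.
rewrite prodrN card_ord [X in _ = _ * (_ * X)](reindex_inj rev_ord_inj) /=.
under [X in _ = _ * (_ * X)]eq_bigr => i _ do rewrite subKn //.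
by rewrite -natr_fact expr2 mulrCA mulrA.
Qed.

Lemma sqr_eq_m1_even p m (y : 'F_p) : prime p -> p = (2 * m).+1 ->
  y ^+ 2 = -1 -> ~~ odd m.
Proof.
move=> p_pr Ep y2.
have y_neq0 : y != 0.
  by apply: contra_eq_neq y2 => ->; rewrite expr0n eq_sym oppr_eq0 oner_eq0.
have : y ^+ (2 * m) = 1.
  by apply: (mulIf y_neq0); rewrite mul1r -exprSr -Ep -[RHS](expf_card y) card_Fp.
rewrite exprM y2 -signr_odd; case: (odd m) => //= /eqP.
rewrite eq_sym -subr_eq0 opprK -mulr2n -(dvdn_pcharf (pchar_Fp p_pr)) dvdn_prime2 //.
by move=> /eqP p2; move: Ep; rewrite p2; lia.
Qed.

Lemma legendre_m1 p m : prime p -> p = (2 * m).+1 -> legendre (-1) p = (-1) ^+ m.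
Proof.
move=> p_pr Ep; rewrite /legendre ifF; last by rewrite dvdzE /= dvdn1 gtn_eqF ?prime_gt1.
have sqr_m1 (x : nat) : (p%:Z %| x%:Z ^+ 2 - -1)%Z = ((x%:R : 'F_p) ^+ 2 == -1).
  have -> : x%:Z ^+ 2 - -1 = (x * x + 1)%N by rewrite opprK expr2 PoszD PoszM.
  by rewrite dvdzE /= (dvdn_pcharf (pchar_Fp p_pr)) natrD natrM -expr2 addr_eq0.
rewrite -signr_odd; case: (boolP (odd m)) => [m_odd | m_even].
- rewrite ifF //; apply/negbTE/existsP => -[x].
  by rewrite sqr_m1 => /eqP/(sqr_eq_m1_even p_pr Ep); rewrite m_odd.
- rewrite ifT //; apply/existsP; exists (Ordinal (ltn_pmod m`! (prime_gt0 p_pr))).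
  rewrite sqr_m1 /= Fp_nat_mod //.
  by have := Wilson_half p_pr Ep; rewrite -signr_odd (negbTE m_even) mul1r => ->.
Qed.

Definition deformed_sum (m s : nat) (a : Qq) : Qq :=
  \sum_(k < m.+1) qpoch (a * qv) (qv ^+ 2) k * qpoch (a^-1 * qv) (qv ^+ 2) (k + s) /
                  (qpoch (qv ^+ 2) (qv ^+ 2) k * qpoch (qv ^+ 2) (qv ^+ 2) (k + s)).

Lemma qv2_neq0 : qv ^+ 2 != 0.
Proof. by rewrite expf_neq0 ?qv_neq0. Qed.

Lemma qv2X_neq1 j : (0 < j)%N -> (qv ^+ 2) ^+ j != 1.
Proof. by move=> j_gt0; rewrite -exprM qvX_neq1 ?muln_gt0. Qed.

Section DeformedSum.
Variables p m s : nat.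
Hypotheses (Ep : p = (2 * m).+1) (le_sm : (s <= m)%N).

Lemma qvX_mul_qv : qv ^+ p * qv = (qv ^+ 2) ^+ m.+1.
Proof. by rewrite -exprSr -exprM Ep; congr (_ ^+ _); lia. Qed.

Lemma qvXV_mul_qv : (qv ^+ p)^-1 * qv = ((qv ^+ 2) ^+ m)^-1.
Proof. by rewrite Ep exprSr invfM mulfVK ?qv_neq0 // exprM. Qed.

Lemma deformed_sum_balanced : prime p -> balanced (qint p) (qv ^+ p) (deformed_sum m s).
Proof.
move=> p_pr; have p_gt0 := prime_gt0 p_pr.
have p_odd : odd p by rewrite Ep /= oddM.
have qv_int : qdvd (qint p) 0 qv by apply: qdvd_polyF0.
have Q_int := qdvdX 2 qv_int.
have x1 := qdvd_qvX_sub1 p; have xV1 := qdvd_qvXV_sub1 p_gt0; have x2 := qdvd_qvX_sub2 p_gt0.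
apply: balanced_sum => k; apply: balancedM; first apply: balancedM.
- exact: balanced_qpoch (balanced_id x1 xV1 x2) qv_int Q_int.
- exact: balanced_qpoch (balanced_inv x1 xV1 x2) qv_int Q_int.
- apply/balanced_const; rewrite invfM; apply: (@qdvdM _ 0 0); apply: qdvd_qpochV => //.
  all: by move: (ltn_ord k); lia.
Qed.

Lemma deformed_sum_qvX : deformed_sum m s (qv ^+ p) = qratio ((qv ^+ 2) ^+ m)^-1 (qv ^+ 2) m.
Proof.
rewrite -(qratio_sum_shiftl qv2_neq0 qv2X_neq1 le_sm); apply: eq_bigr => k _.
by rewrite qvX_mul_qv qvXV_mul_qv /qratio mulf_div.
Qed.

Lemma deformed_sum_qvXV :
  deformed_sum m s (qv ^+ p)^-1 = qratio ((qv ^+ 2) ^+ m)^-1 (qv ^+ 2) m.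
Proof.
rewrite -(qratio_sum_shiftr qv2_neq0 qv2X_neq1 m s); apply: eq_bigr => k _.
by rewrite invrK qvX_mul_qv qvXV_mul_qv /qratio mulf_div.
Qed.

End DeformedSum.

Theorem theorem2p6 (p s : nat) :
  prime p -> odd p -> (s <= (p - 1)./2)%N ->
  qcongr
    (\sum_(k < ((p - 1)./2).+1)
        (qpoch qv (qv ^+ 2) k * qpoch qv (qv ^+ 2) (k + s)) /
        (qpoch (qv ^+ 2) (qv ^+ 2) k * qpoch (qv ^+ 2) (qv ^+ 2) (k + s)))
    ((legendre (-1) p)%:~R * qv ^- ((p ^ 2 - 1) %/ 4))
    (qint p) 2.
Proof.
move=> p_pr p_odd; set m := ((p - 1)./2)%N => le_sm.
have Ep : p = (2 * m).+1.
  have := odd_double_half (p - 1).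
  by rewrite oddB ?prime_gt0 // p_odd /= add0n -/m -mul2n; lia.
have exponent : (2 * 'C(m.+1, 2) = (p ^ 2 - 1) %/ 4)%N.
  have -> : (p ^ 2 - 1 = 4 * (m * m.+1))%N by rewrite Ep -mulnn; nia.
  by rewrite mulKn // -(mul_bin_diag m.+1 1) bin1 mulnC.
have := balanced_congr (deformed_sum_balanced Ep le_sm p_pr)
  (deformed_sum_qvX Ep le_sm) (deformed_sum_qvXV Ep le_sm).
rewrite (qratio_top qv2_neq0 qv2X_neq1 m).
rewrite (legendre_m1 p_pr Ep) intr_sign -exprM exponent /deformed_sum invr1 !mul1r.
by move/qdvdP.
Qed.
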